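(* There is a deterministic $1$-local $0$-memory routing algorithm on half-$\theta_6$-graphs such that for every finite point set $P$ in general position and all $u,w\in P$ with $w$ in a positive cone of $u$, the path followed when routing from $u$ to $w$ has length at most $(\sqrt{3}\cos\alpha+\sin\alpha)\cdot|uw|$, where $m$ is the midpoint of the side of the canonical triangle $T_{uw}$ opposite $u$ and $\alpha$ is the unsigned angle between $uw$ and $um$.
   Context: Cones: for a point $u$, the plane is partitioned into six cones with apex $u$, bounded by the rays from $u$ at angles $j\pi/3$ ($j=0,\dots,5$) from the positive $x$-axis; counterclockwise from the positive $x$-axis they are $\overline{C}_1, C_0, \overline{C}_2, C_1, \overline{C}_0, C_2$; $C_0,C_1,C_2$ are positive and the others negative. General position: no two points of $P$ lie on a line parallel to a cone boundary ray. Half-$\theta_6$-graph of $P$: for each $u$ and each positive cone $C$ of $u$ containing other points, add an edge from $u$ to the point of $P$ in $C$ whose orthogonal projection onto the bisector of $C$ is closest to $u$; edges weighted by Euclidean length. Canonical triangle $T_{uv}$ (for $v$ in a positive cone $C$ of $u$): the triangle bounded by the boundary rays of $C$ and the line through $v$ perpendicular to the bisector of $C$. Routing model: vertices are identified by coordinates; a deterministic $1$-local $0$-memory routing algorithm chooses the neighbour of the current vertex $s$ to forward to as a deterministic function only of $s$, the destination $t$, and the neighbours of $s$ (with coordinates), with no memory carried by the message. Path length is the sum of Euclidean edge lengths traversed until the destination is reached. *)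

From Stdlib Require Import Reals List.
Open Scope R_scope.

Definition point : Type := (R * R)%type.

Definition vsub (p q : point) : point := (fst p - fst q, snd p - snd q).
Definition dot (a b : point) : R := fst a * fst b + snd a * snd b.
Definition cross (a b : point) : R := fst a * snd b - snd a * fst b.
Definition edist (p q : point) : R :=
  sqrt ((fst p - fst q) ^ 2 + (snd p - snd q) ^ 2).

Definition ray_dir (j : nat) : point := (cos (INR j * PI / 3), sin (INR j * PI / 3)).

(** Sectors: sector [k] (k = 0..5) of apex [u] is the open region strictly
    between the boundary rays at angles k*pi/3 and (k+1)*pi/3.
    Counterclockwise from the positive x-axis the sectors are
    Cbar1, C0, Cbar2, C1, Cbar0, C2, so the positive cone C_i (i = 0,1,2)
    is sector 2i+1. Boundary points are irrelevant under general position. *)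
Definition in_sector (k : nat) (u v : point) : Prop :=
  cross (ray_dir k) (vsub v u) > 0 /\ cross (vsub v u) (ray_dir (S k)) > 0.

Definition pos_sector (i : nat) : nat := (2 * i + 1)%nat.

Definition in_pos_cone (i : nat) (u v : point) : Prop :=
  (i < 3)%nat /\ in_sector (pos_sector i) u v.

Definition bisector (i : nat) : point :=
  (cos (INR (2 * pos_sector i + 1) * PI / 6), sin (INR (2 * pos_sector i + 1) * PI / 6)).

Definition proj (i : nat) (u v : point) : R := dot (vsub v u) (bisector i).

Definition general_position (P : list point) : Prop :=
  forall p q, In p P -> In q P -> p <> q ->
  forall j : nat, (j < 6)%nat -> cross (ray_dir j) (vsub q p) <> 0.

Definition half_theta6_choice (P : list point) (u v : point) : Prop :=
  In u P /\ In v P /\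
  exists i, in_pos_cone i u v /\
    forall x, In x P -> in_pos_cone i u x -> proj i u v <= proj i u x.

Definition ht6_adj (P : list point) (s v : point) : Prop :=
  half_theta6_choice P s v \/ half_theta6_choice P v s.

(** A deterministic 1-local 0-memory routing algorithm: the next vertex is a
    function of the current vertex s, the destination t and the neighbour set
    of s (points, i.e. with coordinates). *)
Definition routing_alg : Type := point -> point -> (point -> Prop) -> point.

Fixpoint route (A : routing_alg) (P : list point) (u t : point) (k : nat) : point :=
  match k with
  | O => u
  | S k' => let s := route A P u t k' in A s t (ht6_adj P s)
  end.

Fixpoint path_length (x : nat -> point) (n : nat) : R :=
  match n with
  | O => 0
  | S n' => path_length x n' + edist (x n') (x (S n'))
  end.

Definition padd (p a : point) : point := (fst p + fst a, snd p + snd a).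
Definition pscale (c : R) (a : point) : point := (c * fst a, c * snd a).

(** Canonical triangle T_{uw} for w in the positive cone C_i of u: apex u,
    the two other vertices are where the boundary rays of C_i meet the line
    through w perpendicular to the bisector (at distance proj/cos(pi/6)). *)
Definition canon_vertex1 (i : nat) (u w : point) : point :=
  padd u (pscale (proj i u w / cos (PI / 6)) (ray_dir (pos_sector i))).
Definition canon_vertex2 (i : nat) (u w : point) : point :=
  padd u (pscale (proj i u w / cos (PI / 6)) (ray_dir (S (pos_sector i)))).

Definition canon_mid (i : nat) (u w : point) : point :=
  pscale (1 / 2) (padd (canon_vertex1 i u w) (canon_vertex2 i u w)).

Definition vangle (a b : point) : R :=
  acos (dot a b / (sqrt (dot a a) * sqrt (dot b b))).

From Stdlib Require Import Reals List Lra Lia Wf_nat ClassicalEpsilon Classical.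
Open Scope R_scope.

(* Measure points by their three triangular coordinates, the projections on the bisectors of
   the positive cones: they sum to zero, and general position makes each of them injective on
   P. Two points of P whose spanning triangle (the smallest one with sides perpendicular to
   the bisectors) contains no other point of P are adjacent in the half-theta_6-graph.
   The router maintains that the current vertex v is, along some axis m, the strictly lowest
   point of P in the triangle of v and the target w; it forwards to the next lowest point along
   m, which is then adjacent to v. The potential (2/sqrt 3)(h_m - min(h_m', h_m'')), where the
   h are the coordinate gaps from v to w, drops at each hop by at least the hop's length and
   starts at exactly (sqrt 3 cos alpha + sin alpha)|uw|; the number of points in the triangle
   strictly decreases, so the route reaches w. *)

Lemma sqrt3_sq : sqrt 3 * sqrt 3 = 3.
Proof. apply sqrt_sqrt; lra. Qed.

Lemma sqrt3_pos : 0 < sqrt 3.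
Proof. apply sqrt_lt_R0; lra. Qed.

Lemma ray_dir_0 : ray_dir 0 = (1, 0).
Proof.
  unfold ray_dir. replace (INR 0 * PI / 3) with 0 by (simpl; field).
  now rewrite cos_0, sin_0.
Qed.

Lemma ray_dir_1 : ray_dir 1 = (1 / 2, sqrt 3 / 2).
Proof.
  unfold ray_dir. replace (INR 1 * PI / 3) with (PI / 3) by (simpl; field).
  now rewrite cos_PI3, sin_PI3.
Qed.

Lemma ray_dir_2 : ray_dir 2 = (- (1 / 2), sqrt 3 / 2).
Proof.
  unfold ray_dir. replace (INR 2 * PI / 3) with (PI - PI / 3) by (simpl; field).
  now rewrite Rtrigo_facts.cos_pi_minus, sin_PI_x, cos_PI3, sin_PI3.
Qed.

Lemma ray_dir_3 : ray_dir 3 = (-1, 0).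
Proof.
  unfold ray_dir. replace (INR 3 * PI / 3) with PI by (simpl; field).
  now rewrite cos_PI, sin_PI.
Qed.

Lemma ray_dir_4 : ray_dir 4 = (- (1 / 2), - (sqrt 3 / 2)).
Proof.
  unfold ray_dir. replace (INR 4 * PI / 3) with (PI / 3 + PI) by (simpl; field).
  now rewrite neg_cos, neg_sin, cos_PI3, sin_PI3.
Qed.

Lemma ray_dir_5 : ray_dir 5 = (1 / 2, - (sqrt 3 / 2)).
Proof.
  unfold ray_dir. replace (INR 5 * PI / 3) with ((PI - PI / 3) + PI) by (simpl; field).
  rewrite neg_cos, neg_sin, Rtrigo_facts.cos_pi_minus, sin_PI_x, cos_PI3, sin_PI3.
  f_equal; ring.
Qed.

Lemma ray_dir_6 : ray_dir 6 = (1, 0).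
Proof.
  unfold ray_dir. replace (INR 6 * PI / 3) with (2 * PI) by (simpl; field).
  now rewrite cos_2PI, sin_2PI.
Qed.

(** * Triangular coordinates *)

Inductive axis := Ax0 | Ax1 | Ax2.

Definition axis_succ (j : axis) : axis :=
  match j with Ax0 => Ax1 | Ax1 => Ax2 | Ax2 => Ax0 end.

Definition axis_pred (j : axis) : axis :=
  match j with Ax0 => Ax2 | Ax1 => Ax0 | Ax2 => Ax1 end.

Definition axis_index (j : axis) : nat :=
  match j with Ax0 => 0 | Ax1 => 1 | Ax2 => 2 end.

Definition bis_vec (j : axis) : point :=
  match j with
  | Ax0 => (0, 1)
  | Ax1 => (- (sqrt 3 / 2), - (1 / 2))
  | Ax2 => (sqrt 3 / 2, - (1 / 2))
  end.

Definition tcoord (j : axis) (p : point) : R := dot p (bis_vec j).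

Lemma axis_cases j m : m = j \/ m = axis_succ j \/ m = axis_pred j.
Proof. destruct j, m; auto. Qed.

Lemma axis_index_lt i : (i < 3)%nat -> exists j, i = axis_index j.
Proof.
  intros. destruct i as [|[|[|]]]; [exists Ax0 | exists Ax1 | exists Ax2 | lia]; auto.
Qed.

Lemma bisector_axis j : bisector (axis_index j) = bis_vec j.
Proof.
  unfold bisector, pos_sector. destruct j; simpl axis_index.
  - replace (INR (2 * (2 * 0 + 1) + 1) * PI / 6) with (PI / 2) by (simpl; field).
    now rewrite cos_PI2, sin_PI2.
  - replace (INR (2 * (2 * 1 + 1) + 1) * PI / 6) with (PI / 6 + PI) by (simpl; field).
    now rewrite neg_cos, neg_sin, cos_PI6, sin_PI6.
  - replace (INR (2 * (2 * 2 + 1) + 1) * PI / 6) with ((PI - PI / 6) + PI)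
      by (simpl; field).
    rewrite neg_cos, neg_sin, Rtrigo_facts.cos_pi_minus, sin_PI_x, cos_PI6, sin_PI6.
    simpl; f_equal; field.
Qed.

Lemma tcoord_sum j p : tcoord j p + tcoord (axis_succ j) p + tcoord (axis_pred j) p = 0.
Proof. unfold tcoord, dot; destruct j; simpl; field. Qed.

Lemma tcoord_vsub j p q : tcoord j (vsub p q) = tcoord j p - tcoord j q.
Proof. unfold tcoord, dot, vsub; simpl; ring. Qed.

Lemma dot_self_tcoord j d :
  dot d d = 2 / 3 * (tcoord j d ^ 2 + tcoord (axis_succ j) d ^ 2 + tcoord (axis_pred j) d ^ 2).
Proof.
  pose proof sqrt3_sq.
  transitivity (2 / 3 * (3 / 2 * snd d ^ 2 + sqrt 3 * sqrt 3 / 2 * fst d ^ 2)).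
  - rewrite H. unfold dot. field.
  - unfold tcoord, dot. destruct j; simpl; field.
Qed.

Lemma cross_bis_vec j d :
  sqrt 3 * cross d (bis_vec j) = tcoord (axis_pred j) d - tcoord (axis_succ j) d.
Proof.
  destruct d as [x y].
  assert (E : sqrt 3 * sqrt 3 * y = 3 * y) by (rewrite sqrt3_sq; ring).
  unfold cross, tcoord, dot. destruct j; simpl; lra.
Qed.

Lemma tcoord_lt_of_neq p q : p <> q -> exists m, tcoord m p < tcoord m q.
Proof.
  intros Hpq. apply NNPP. intros Hno. apply Hpq.
  assert (Hle : forall m, tcoord m q <= tcoord m p).
  { intro m. apply Rnot_lt_le. intro Hlt. apply Hno. exists m. lra. }
  pose proof (Hle Ax0). pose proof (Hle Ax1). pose proof (Hle Ax2).
  pose proof (tcoord_sum Ax0 p). pose proof (tcoord_sum Ax0 q). pose proof sqrt3_pos.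
  destruct p as [a b], q as [c d]. unfold tcoord, dot in *; simpl in *.
  assert (b = d) by lra. assert (sqrt 3 * a = sqrt 3 * c) by lra.
  f_equal; [apply Rmult_eq_reg_l with (sqrt 3) | ]; lra.
Qed.

Definition tcoord_distinct (P : list point) : Prop :=
  forall p q, In p P -> In q P -> p <> q -> forall m, tcoord m p <> tcoord m q.

Lemma general_position_tcoord_distinct P : general_position P -> tcoord_distinct P.
Proof.
  intros H p q Hp Hq Hne m Heq.
  destruct m; [apply (H p q Hp Hq Hne 0%nat) | apply (H p q Hp Hq Hne 2%nat)
              | apply (H p q Hp Hq Hne 4%nat)]; try lia;
  [rewrite ray_dir_0 | rewrite ray_dir_2 | rewrite ray_dir_4];
  unfold tcoord, dot, cross, vsub in *; simpl in *; lra.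
Qed.

Definition in_cone (j : axis) (u v : point) : Prop :=
  tcoord (axis_succ j) v < tcoord (axis_succ j) u /\
  tcoord (axis_pred j) v < tcoord (axis_pred j) u.

Lemma in_pos_cone_iff j u v : in_pos_cone (axis_index j) u v <-> in_cone j u v.
Proof.
  unfold in_pos_cone, in_sector, pos_sector, in_cone.
  destruct j; simpl axis_index; simpl (2 * _ + 1)%nat;
  [rewrite ray_dir_1, ray_dir_2 | rewrite ray_dir_3, ray_dir_4 | rewrite ray_dir_5, ray_dir_6];
  unfold cross, vsub, tcoord, dot; simpl.
  all: split; [intros (_ & H1 & H2); split; lra | intros [H1 H2]; split; [lia | split; lra]].
Qed.

Lemma proj_tcoord j u v : proj (axis_index j) u v = tcoord j v - tcoord j u.
Proof. unfold proj. rewrite bisector_axis. apply tcoord_vsub. Qed.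

Lemma in_cone_or P v y : tcoord_distinct P -> In v P -> In y P -> v <> y ->
  (exists j, in_cone j v y) \/ (exists j, in_cone j y v).
Proof.
  intros Hd Hv Hy Hne.
  pose proof (Hd v y Hv Hy Hne Ax0). pose proof (Hd v y Hv Hy Hne Ax1).
  pose proof (Hd v y Hv Hy Hne Ax2).
  pose proof (tcoord_sum Ax0 v). pose proof (tcoord_sum Ax0 y).
  unfold in_cone; simpl in *.
  destruct (Rdichotomy _ _ H); destruct (Rdichotomy _ _ H0); destruct (Rdichotomy _ _ H1).
  all: first [ left; exists Ax0; simpl; split; lra | left; exists Ax1; simpl; split; lra
             | left; exists Ax2; simpl; split; lra | right; exists Ax0; simpl; split; lra
             | right; exists Ax1; simpl; split; lra | right; exists Ax2; simpl; split; lra ].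
Qed.

(** * Triangles spanned by two points *)

Definition in_tri (v w z : point) : Prop :=
  forall m, tcoord m z <= Rmax (tcoord m v) (tcoord m w).

Lemma in_tri_l v w : in_tri v w v.
Proof. intro m. apply Rmax_l. Qed.

Lemma in_tri_r v w : in_tri v w w.
Proof. intro m. apply Rmax_r. Qed.

Lemma in_tri_sym v w z : in_tri v w z -> in_tri w v z.
Proof. intros H m. rewrite Rmax_comm. apply H. Qed.

Lemma in_tri_trans_l v w x z : in_tri v w x -> in_tri x w z -> in_tri v w z.
Proof.
  intros H1 H2 m. specialize (H1 m). specialize (H2 m).
  pose proof (Rmax_l (tcoord m v) (tcoord m w)). pose proof (Rmax_r (tcoord m v) (tcoord m w)).
  apply Rle_trans with (1 := H2). apply Rmax_lub; lra.
Qed.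

Lemma in_tri_trans_r v w x z : in_tri v w x -> in_tri v x z -> in_tri v w z.
Proof.
  intros H1 H2 m. specialize (H1 m). specialize (H2 m).
  pose proof (Rmax_l (tcoord m v) (tcoord m w)).
  apply Rle_trans with (1 := H2). apply Rmax_lub; lra.
Qed.

Lemma not_in_tri_both P v x w : tcoord_distinct P -> In v P -> In x P -> x <> v -> v <> w ->
  in_tri v w x -> in_tri x w v -> False.
Proof.
  intros Hd Hv Hx Hxv Hvw H1 H2.
  destruct (tcoord_lt_of_neq w v (not_eq_sym Hvw)) as [m Hm].
  specialize (H1 m). specialize (H2 m). pose proof (Hd x v Hx Hv Hxv m).
  unfold Rmax in *.
  destruct (Rle_dec (tcoord m v) (tcoord m w)), (Rle_dec (tcoord m x) (tcoord m w)); lra.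
Qed.

Definition tri_empty (P : list point) (v y : point) : Prop :=
  forall z, In z P -> z <> v -> z <> y -> ~ in_tri v y z.

Lemma half_theta6_choice_of_tri_empty P j a b : In a P -> In b P -> in_cone j a b ->
  tri_empty P a b -> half_theta6_choice P a b.
Proof.
  intros Ha Hb Hc Hemp. split; [auto | split; [auto |]].
  exists (axis_index j). split; [now apply in_pos_cone_iff |].
  intros x Hx Hcx. apply in_pos_cone_iff in Hcx. rewrite !proj_tcoord.
  apply Rnot_lt_le. intro Hlt.
  destruct Hc as [Hc1 Hc2], Hcx as [Hx1 Hx2].
  apply (Hemp x Hx); [intros -> | intros -> |]; try lra.
  intro m. pose proof (Rmax_l (tcoord m a) (tcoord m b)).
  pose proof (Rmax_r (tcoord m a) (tcoord m b)).
  destruct (axis_cases j m) as [-> | [-> | ->]]; lra.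
Qed.

Lemma ht6_adj_of_tri_empty P v y : tcoord_distinct P -> In v P -> In y P -> v <> y ->
  tri_empty P v y -> ht6_adj P v y.
Proof.
  intros Hd Hv Hy Hne Hemp.
  destruct (in_cone_or P v y Hd Hv Hy Hne) as [[j Hj] | [j Hj]].
  - left. now apply (half_theta6_choice_of_tri_empty P j).
  - right. apply (half_theta6_choice_of_tri_empty P j); auto.
    intros z Hz H1 H2 H3. apply (Hemp z Hz H2 H1). now apply in_tri_sym.
Qed.

Lemma ht6_adj_in P v y : ht6_adj P v y -> In y P.
Proof. now intros [(_ & H & _) | (H & _)]. Qed.

Lemma list_argmin {A : Type} (Q : A -> Prop) (f : A -> R) (l : list A) :
  (exists x, In x l /\ Q x) ->
  exists x, In x l /\ Q x /\ forall y, In y l -> Q y -> f x <= f y.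
Proof.
  induction l as [|a l IH]; intros [x [Hx HQ]]; [destruct Hx |].
  destruct (classic (exists x, In x l /\ Q x)) as [He | Hne].
  - destruct (IH He) as [m [Hm [HQm Hmin]]].
    destruct (classic (Q a /\ f a < f m)) as [[Ha Hlt] | Hn].
    + exists a. split; [now left | split; auto].
      intros y [<- | Hy] HQy; [lra |]. specialize (Hmin y Hy HQy). lra.
    + exists m. split; [now right | split; auto].
      intros y [<- | Hy] HQy; [| auto].
      apply Rnot_lt_le. intro. apply Hn. auto.
  - destruct Hx as [<- | Hx]; [| exfalso; apply Hne; exists x; auto].
    exists a. split; [now left | split; auto].
    intros y [<- | Hy] HQy; [lra |]. exfalso; apply Hne; exists y; auto.
Qed.

Definition tri_size (v y : point) : R :=
  Rmax (tcoord Ax0 v) (tcoord Ax0 y) + Rmax (tcoord Ax1 v) (tcoord Ax1 y)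
  + Rmax (tcoord Ax2 v) (tcoord Ax2 y).

Lemma tri_size_lt P v y z : tcoord_distinct P -> In y P -> In z P -> v <> y -> z <> y ->
  in_tri v y z -> tri_size v z < tri_size v y.
Proof.
  intros Hd Hy Hz Hvy Hzy H.
  assert (Hle : forall m, Rmax (tcoord m v) (tcoord m z) <= Rmax (tcoord m v) (tcoord m y)).
  { intro m. apply Rmax_lub; [apply Rmax_l | apply H]. }
  destruct (tcoord_lt_of_neq v y Hvy) as [k Hk].
  assert (Hlt : Rmax (tcoord k v) (tcoord k z) < Rmax (tcoord k v) (tcoord k y)).
  { specialize (H k). pose proof (Hd z y Hz Hy Hzy k).
    unfold Rmax in *.
    destruct (Rle_dec (tcoord k v) (tcoord k y)), (Rle_dec (tcoord k v) (tcoord k z)); lra. }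
  unfold tri_size. pose proof (Hle Ax0). pose proof (Hle Ax1). pose proof (Hle Ax2).
  destruct k; lra.
Qed.

(* The candidate of least [tri_size] spans an empty triangle with [v], hence is a neighbour. *)
Lemma ht6_neighbour_below P v w r m : tcoord_distinct P -> In v P -> In r P ->
  in_tri v w r -> r <> v -> tcoord m r < tcoord m v ->
  exists y, ht6_adj P v y /\ in_tri v w y /\ y <> v /\ tcoord m y < tcoord m v.
Proof.
  intros Hd Hv Hr Hr_tri Hrv Hm.
  destruct (list_argmin (fun y => in_tri v w y /\ y <> v /\ tcoord m y < tcoord m v)
                        (tri_size v) P) as [y [Hy [[Hy_tri [Hyv Hmy]] Hmin]]].
  { exists r. auto. }
  exists y. split; [| auto].
  apply ht6_adj_of_tri_empty; auto.
  intros z Hz Hzv Hzy Hz_tri.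
  assert (Hz_cand : in_tri v w z /\ z <> v /\ tcoord m z < tcoord m v).
  { split; [now apply (in_tri_trans_r v w y) | split; auto].
    specialize (Hz_tri m). pose proof (Hd z v Hz Hv Hzv m).
    unfold Rmax in Hz_tri. destruct (Rle_dec (tcoord m v) (tcoord m y)); lra. }
  specialize (Hmin z Hz Hz_cand).
  pose proof (tri_size_lt P v y z Hd Hy Hz (not_eq_sym Hyv) Hzy Hz_tri). lra.
Qed.

(** * The potential *)

Definition route_bound (a a1 a2 : R) : R := 2 * sqrt 3 / 3 * (a - Rmin a1 a2).

Lemma route_bound_swap a a1 a2 : route_bound a a1 a2 = route_bound a a2 a1.
Proof. unfold route_bound. now rewrite Rmin_comm. Qed.

Lemma tri_norm_le x y z : 0 <= x -> y <= 0 -> x + y + z = 0 ->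
  sqrt (2 / 3 * (x ^ 2 + y ^ 2 + z ^ 2)) <= 2 * sqrt 3 / 3 * (x - y).
Proof.
  intros Hx Hy Hz. pose proof sqrt3_pos. pose proof sqrt3_sq.
  assert (Hnn : 0 <= 2 * sqrt 3 / 3 * (x - y)) by (apply Rmult_le_pos; lra).
  rewrite <- (sqrt_square _ Hnn). apply sqrt_le_1_alt.
  replace z with (- x - y) by lra.
  replace (2 * sqrt 3 / 3 * (x - y) * (2 * sqrt 3 / 3 * (x - y)))
    with (4 / 9 * (sqrt 3 * sqrt 3) * (x - y) ^ 2) by field.
  rewrite H0. nra.
Qed.

Lemma route_bound_step_aux b b1 b2 a a1 a2 :
  b + b1 + b2 = 0 -> 0 < b -> b1 <= 0 -> a1 - b1 <= a2 - b2 ->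
  sqrt (2 / 3 * (b ^ 2 + b1 ^ 2 + b2 ^ 2)) + route_bound (a - b) (a1 - b1) (a2 - b2)
  <= route_bound a a1 a2.
Proof.
  intros Hb Hpos Hb1 Hmin. pose proof sqrt3_pos.
  pose proof (tri_norm_le b b1 b2 ltac:(lra) Hb1 Hb).
  pose proof (Rmin_l a1 a2).
  unfold route_bound. rewrite Rmin_left by exact Hmin.
  assert (2 * sqrt 3 / 3 * (a - a1) <= 2 * sqrt 3 / 3 * (a - Rmin a1 a2))
    by (apply Rmult_le_compat_l; lra).
  lra.
Qed.

(* If [b1 > 0] then [b2 < 0], and the minimum is attained on the second axis as well. *)
Lemma route_bound_step_ordered b b1 b2 a a1 a2 :
  b + b1 + b2 = 0 -> a + a1 + a2 = 0 -> 0 < b -> 0 < a ->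
  b <= Rmax 0 a -> b1 <= Rmax 0 a1 -> a1 - b1 <= a2 - b2 ->
  sqrt (2 / 3 * (b ^ 2 + b1 ^ 2 + b2 ^ 2)) + route_bound (a - b) (a1 - b1) (a2 - b2)
  <= route_bound a a1 a2.
Proof.
  intros Hb Ha Hpos Ha_pos Hba Hb1a1 Hmin.
  destruct (Rle_lt_dec b1 0) as [Hb1 | Hb1].
  - now apply route_bound_step_aux.
  - rewrite (route_bound_swap (a - b)), (route_bound_swap a).
    replace (b ^ 2 + b1 ^ 2 + b2 ^ 2) with (b ^ 2 + b2 ^ 2 + b1 ^ 2) by ring.
    rewrite Rmax_right in Hba by lra.
    unfold Rmax in Hb1a1. destruct (Rle_dec 0 a1); [| lra].
    apply route_bound_step_aux; lra.
Qed.

Lemma route_bound_step b b1 b2 a a1 a2 :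
  b + b1 + b2 = 0 -> a + a1 + a2 = 0 -> 0 < b -> 0 < a ->
  b <= Rmax 0 a -> b1 <= Rmax 0 a1 -> b2 <= Rmax 0 a2 ->
  sqrt (2 / 3 * (b ^ 2 + b1 ^ 2 + b2 ^ 2)) + route_bound (a - b) (a1 - b1) (a2 - b2)
  <= route_bound a a1 a2.
Proof.
  intros Hb Ha Hpos Ha_pos Hba Hb1 Hb2.
  destruct (Rle_lt_dec (a1 - b1) (a2 - b2)).
  - now apply route_bound_step_ordered.
  - rewrite (route_bound_swap (a - b)), (route_bound_swap a).
    replace (b ^ 2 + b1 ^ 2 + b2 ^ 2) with (b ^ 2 + b2 ^ 2 + b1 ^ 2) by ring.
    apply route_bound_step_ordered; lra.
Qed.

Lemma edist_dot v x : edist v x = sqrt (dot (vsub x v) (vsub x v)).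
Proof. unfold edist, dot, vsub. f_equal. simpl. ring. Qed.

Lemma edist_tcoord j v x :
  edist v x = sqrt (2 / 3 * ((tcoord j x - tcoord j v) ^ 2
    + (tcoord (axis_succ j) x - tcoord (axis_succ j) v) ^ 2
    + (tcoord (axis_pred j) x - tcoord (axis_pred j) v) ^ 2)).
Proof. now rewrite edist_dot, (dot_self_tcoord j), !tcoord_vsub. Qed.

Definition potential (m : axis) (v w : point) : R :=
  route_bound (tcoord m w - tcoord m v)
    (tcoord (axis_succ m) w - tcoord (axis_succ m) v)
    (tcoord (axis_pred m) w - tcoord (axis_pred m) v).

Lemma potential_self m w : potential m w w = 0.
Proof.
  unfold potential, route_bound. rewrite !Rminus_diag, Rmin_left by lra. ring.
Qed.

Definition lowest_in_tri (m : axis) (P : list point) (v w : point) : Prop :=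
  tcoord m v < tcoord m w /\
  forall r, In r P -> in_tri v w r -> r <> v -> tcoord m v < tcoord m r.

Definition second_lowest (m : axis) (P : list point) (v w x : point) : Prop :=
  In x P /\ in_tri v w x /\ x <> v /\
  forall y, In y P -> in_tri v w y -> y <> v -> tcoord m x <= tcoord m y.

Lemma lowest_in_tri_of_cone P j u w : tcoord_distinct P -> In u P -> in_cone j u w ->
  lowest_in_tri j P u w.
Proof.
  intros Hd Hu [H1 H2].
  pose proof (tcoord_sum j u). pose proof (tcoord_sum j w).
  split; [lra |]. intros r Hr Hr_tri Hne. pose proof (tcoord_sum j r).
  pose proof (Hr_tri (axis_succ j)) as S1. pose proof (Hr_tri (axis_pred j)) as S2.
  rewrite Rmax_left in S1, S2 by lra.
  pose proof (Hd r u Hr Hu Hne (axis_succ j)). pose proof (Hd r u Hr Hu Hne (axis_pred j)).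
  lra.
Qed.

Lemma second_lowest_adj P v w m x : tcoord_distinct P -> In v P ->
  lowest_in_tri m P v w -> second_lowest m P v w x -> ht6_adj P v x.
Proof.
  intros Hd Hv [Hvw Hlow] (Hx & Hx_tri & Hxv & Hmin).
  apply ht6_adj_of_tri_empty; auto.
  intros z Hz Hzv Hzx Hz_tri.
  assert (Hz_tri' : in_tri v w z) by now apply (in_tri_trans_r v w x).
  pose proof (Hlow z Hz Hz_tri' Hzv). pose proof (Hlow x Hx Hx_tri Hxv).
  pose proof (Hmin z Hz Hz_tri' Hzv). specialize (Hz_tri m).
  pose proof (Hd z x Hz Hx Hzx m).
  unfold Rmax in Hz_tri. destruct (Rle_dec (tcoord m v) (tcoord m x)); lra.
Qed.

Lemma second_lowest_lowest P v w m x : tcoord_distinct P -> In v P -> In w P -> v <> w ->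
  second_lowest m P v w x -> x <> w -> lowest_in_tri m P x w.
Proof.
  intros Hd Hv Hw Hvw (Hx & Hx_tri & Hxv & Hmin) Hxw. split.
  - pose proof (Hmin w Hw (in_tri_r v w) (not_eq_sym Hvw)).
    pose proof (Hd x w Hx Hw Hxw m). lra.
  - intros r Hr Hr_tri Hrx.
    assert (Hrv : r <> v).
    { intros ->. now apply (not_in_tri_both P v x w). }
    pose proof (Hmin r Hr (in_tri_trans_l v w x r Hx_tri Hr_tri) Hrv).
    pose proof (Hd x r Hx Hr (not_eq_sym Hrx) m). lra.
Qed.

Lemma second_lowest_potential P v w m x :
  lowest_in_tri m P v w -> second_lowest m P v w x ->
  edist v x + potential m x w <= potential m v w.
Proof.
  intros [Hvw Hlow] (Hx & Hx_tri & Hxv & _).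
  pose proof (Hlow x Hx Hx_tri Hxv).
  assert (Hbelow : forall k, tcoord k x - tcoord k v <= Rmax 0 (tcoord k w - tcoord k v)).
  { intro k. specialize (Hx_tri k). unfold Rmax in *.
    destruct (Rle_dec (tcoord k v) (tcoord k w)), (Rle_dec 0 (tcoord k w - tcoord k v)); lra. }
  pose proof (tcoord_sum m x). pose proof (tcoord_sum m v). pose proof (tcoord_sum m w).
  rewrite (edist_tcoord m). unfold potential.
  assert (E : forall k, tcoord k w - tcoord k x
                       = (tcoord k w - tcoord k v) - (tcoord k x - tcoord k v)) by (intro; ring).
  rewrite !E. apply route_bound_step; try lra; apply Hbelow.
Qed.

(** * The routing algorithm *)

Definition blocked (v w : point) (N : point -> Prop) (m : axis) : Prop :=
  exists y, N y /\ in_tri v w y /\ y <> v /\ tcoord m y < tcoord m v.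

Definition admissible (v w : point) (N : point -> Prop) (m : axis) : Prop :=
  tcoord m v < tcoord m w /\ ~ blocked v w N m.

Definition best_axis_spec (v w : point) (N : point -> Prop) (m : axis) : Prop :=
  admissible v w N m /\
  forall m', admissible v w N m' -> potential m v w <= potential m' v w.

Definition best_axis (v w : point) (N : point -> Prop) : axis :=
  epsilon (inhabits Ax0) (best_axis_spec v w N).

Definition lowest_neighbour_spec (v w : point) (N : point -> Prop) (m : axis) (x : point) :
  Prop :=
  N x /\ in_tri v w x /\ x <> v /\
  forall y, N y -> in_tri v w y -> y <> v -> tcoord m x <= tcoord m y.

(* At [s], among the axes along which no neighbour of [s] in the triangle of [s] and [t] lies
   below [s], take one of least potential; forward to the neighbour in that triangle that is
   lowest along it. Both choices exist at every vertex of a route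
   (see [tri_routing_second_lowest]). *)
Definition tri_routing : routing_alg :=
  fun s t N => epsilon (inhabits s) (lowest_neighbour_spec s t N (best_axis s t N)).

Lemma lowest_in_tri_admissible P m v w :
  lowest_in_tri m P v w -> admissible v w (ht6_adj P v) m.
Proof.
  intros [Hw Hlow]. split; [exact Hw |]. intros (y & Hy & Hy_tri & Hne & Hlt).
  pose proof (Hlow y (ht6_adj_in P v y Hy) Hy_tri Hne). lra.
Qed.

(* A point below [v] in the triangle forces a neighbour below [v] in it. *)
Lemma admissible_lowest_in_tri P m v w : tcoord_distinct P -> In v P ->
  admissible v w (ht6_adj P v) m -> lowest_in_tri m P v w.
Proof.
  intros Hd Hv [Hw Hnb]. split; [exact Hw |].
  intros r Hr Hr_tri Hne. apply Rnot_le_lt. intro Hle.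
  assert (Hlt : tcoord m r < tcoord m v) by (pose proof (Hd r v Hr Hv Hne m); lra).
  apply Hnb. now apply (ht6_neighbour_below P v w r m).
Qed.

Lemma best_axis_correct P j v w : tcoord_distinct P -> In v P -> lowest_in_tri j P v w ->
  lowest_in_tri (best_axis v w (ht6_adj P v)) P v w /\
  potential (best_axis v w (ht6_adj P v)) v w <= potential j v w.
Proof.
  intros Hd Hv Hlow.
  assert (Hex : exists m, best_axis_spec v w (ht6_adj P v) m).
  { destruct (list_argmin (admissible v w (ht6_adj P v)) (fun m => potential m v w)
                          (Ax0 :: Ax1 :: Ax2 :: nil)) as (m & _ & Hm & Hmin).
    - exists j. split; [destruct j; simpl; auto |]. now apply lowest_in_tri_admissible.
    - exists m. split; [exact Hm |]. intros m' Hm'. apply Hmin; [destruct m'; simpl |]; auto. }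
  destruct (epsilon_spec (inhabits Ax0) _ Hex) as [Hadm Hmin].
  split; [now apply (admissible_lowest_in_tri P) |].
  apply Hmin. now apply lowest_in_tri_admissible.
Qed.

Lemma second_lowest_exists P m v w : In w P -> v <> w -> exists x, second_lowest m P v w x.
Proof.
  intros Hw Hvw.
  destruct (list_argmin (fun y => in_tri v w y /\ y <> v) (tcoord m) P)
    as (x & Hx & [Hx_tri Hxv] & Hmin).
  { exists w. split; [exact Hw | split; [apply in_tri_r | auto]]. }
  exists x. repeat split; auto.
Qed.

Lemma tri_routing_second_lowest P j v w : tcoord_distinct P -> In v P -> In w P -> v <> w ->
  lowest_in_tri j P v w ->
  exists m, second_lowest m P v w (tri_routing v w (ht6_adj P v)) /\
            lowest_in_tri m P v w /\ potential m v w <= potential j v w.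
Proof.
  intros Hd Hv Hw Hvw Hlow.
  destruct (best_axis_correct P j v w Hd Hv Hlow) as [Hlow_m Hpot].
  set (m := best_axis v w (ht6_adj P v)) in *.
  exists m. split; [| auto].
  destruct (second_lowest_exists P m v w Hw Hvw) as [x0 Hx0].
  pose proof (second_lowest_adj P v w m x0 Hd Hv Hlow_m Hx0) as Hadj0.
  destruct Hx0 as (_ & Hx0_tri & Hx0v & Hmin0).
  assert (Hex : exists x, lowest_neighbour_spec v w (ht6_adj P v) m x).
  { exists x0. repeat split; auto.
    intros y Hy Hy_tri Hyv. exact (Hmin0 y (ht6_adj_in P v y Hy) Hy_tri Hyv). }
  destruct (epsilon_spec (inhabits v) _ Hex) as (Hadj & Hx_tri & Hxv & Hmin).
  unfold tri_routing. fold m.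
  repeat split; auto; [exact (ht6_adj_in P v _ Hadj) |].
  intros y Hy Hy_tri Hyv.
  specialize (Hmin x0 Hadj0 Hx0_tri Hx0v). specialize (Hmin0 y Hy Hy_tri Hyv). lra.
Qed.

(** * Termination *)

Lemma filter_length_monotone {A : Type} (f g : A -> bool) (l : list A) :
  (forall p, In p l -> f p = true -> g p = true) ->
  (length (filter f l) <= length (filter g l))%nat.
Proof.
  induction l as [|a l IH]; intros H; simpl; [lia |].
  specialize (IH (fun p Hp => H p (or_intror Hp))).
  destruct (f a) eqn:Ef, (g a) eqn:Eg; simpl; try lia.
  rewrite (H a (or_introl eq_refl) Ef) in Eg. discriminate.
Qed.

Lemma filter_length_lt {A : Type} (f g : A -> bool) (l : list A) :
  (forall p, In p l -> f p = true -> g p = true) ->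
  (exists p, In p l /\ g p = true /\ f p = false) ->
  (length (filter f l) < length (filter g l))%nat.
Proof.
  induction l as [|a l IH]; intros H (p & Hp & Hg & Hf); [destruct Hp |]. simpl.
  pose proof (filter_length_monotone f g l (fun p Hp => H p (or_intror Hp))).
  destruct Hp as [<- | Hp].
  - rewrite Hg, Hf. simpl. lia.
  - specialize (IH (fun p Hp => H p (or_intror Hp)) (ex_intro _ p (conj Hp (conj Hg Hf)))).
    destruct (f a) eqn:Ef, (g a) eqn:Eg; simpl; try lia.
    rewrite (H a (or_introl eq_refl) Ef) in Eg. discriminate.
Qed.

Definition tri_count (v w : point) (P : list point) : nat :=
  length (filter (fun p => if excluded_middle_informative (in_tri v w p) then true else false) P).

Lemma tri_count_lt P v w m x : tcoord_distinct P -> In v P -> v <> w ->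
  second_lowest m P v w x -> (tri_count x w P < tri_count v w P)%nat.
Proof.
  intros Hd Hv Hvw (Hx & Hx_tri & Hxv & _). apply filter_length_lt.
  - intros p _.
    destruct (excluded_middle_informative (in_tri x w p)) as [Hp |]; [| discriminate].
    destruct (excluded_middle_informative (in_tri v w p)) as [| Hn]; [auto |].
    exfalso. apply Hn. now apply (in_tri_trans_l v w x).
  - exists v. split; [exact Hv |].
    destruct (excluded_middle_informative (in_tri v w v)) as [| Hn];
      [| exfalso; apply Hn, in_tri_l].
    destruct (excluded_middle_informative (in_tri x w v)) as [Hxv_tri |]; [| auto].
    exfalso. now apply (not_in_tri_both P v x w).
Qed.

Lemma tri_routing_step P j v w : tcoord_distinct P -> In v P -> In w P -> v <> w ->
  lowest_in_tri j P v w ->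
  let x := tri_routing v w (ht6_adj P v) in
  exists m, ht6_adj P v x /\ edist v x + potential m x w <= potential j v w /\
    (x = w \/ lowest_in_tri m P x w) /\ (tri_count x w P < tri_count v w P)%nat.
Proof.
  intros Hd Hv Hw Hvw Hlow x.
  destruct (tri_routing_second_lowest P j v w Hd Hv Hw Hvw Hlow) as (m & Hsec & Hlow_m & Hpot).
  exists m. split; [now apply (second_lowest_adj P v w m) |].
  split; [pose proof (second_lowest_potential P v w m x Hlow_m Hsec); lra |].
  split; [| now apply (tri_count_lt P v w m)].
  destruct (classic (x = w)); [now left | right].
  now apply (second_lowest_lowest P v w m x).
Qed.

Definition route_invariant (P : list point) (u w : point) (j0 : axis) (k : nat) : Prop :=
  let x := route tri_routing P u w in
  In (x k) P /\
  (exists j, (x k = w \/ lowest_in_tri j P (x k) w) /\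
             path_length x k + potential j (x k) w <= potential j0 u w) /\
  (tri_count (x k) w P + k <= tri_count u w P)%nat /\
  (forall m, (m < k)%nat -> ht6_adj P (x m) (x (S m))).

Lemma route_invariant_holds P u w j0 : tcoord_distinct P -> In u P -> In w P ->
  lowest_in_tri j0 P u w ->
  forall k, (forall m, (m < k)%nat -> route tri_routing P u w m <> w) ->
  route_invariant P u w j0 k.
Proof.
  intros Hd Hu Hw Hlow0. induction k as [|k IH]; intros Hbefore.
  - repeat split; simpl; auto; [| lia | intros; lia].
    exists j0. split; [now right | simpl; lra].
  - destruct (IH (fun m Hm => Hbefore m (Nat.lt_lt_succ_r m k Hm)))
      as (Hin & (j & [Hk | Hlow] & Hlen) & Hcount & Hadj).
    { exfalso. exact (Hbefore k (Nat.lt_succ_diag_r k) Hk). }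
    destruct (tri_routing_step P j _ w Hd Hin Hw (Hbefore k (Nat.lt_succ_diag_r k)) Hlow)
      as (m & Hadj_k & Hpot & Hnext & Hcount_k).
    repeat split; cbn [route path_length]; [now apply (ht6_adj_in P _ _ Hadj_k) | | lia |].
    + exists m. split; [exact Hnext | lra].
    + intros m' Hm'. destruct (Nat.eq_dec m' k) as [-> | Hne]; [exact Hadj_k |].
      apply Hadj. lia.
Qed.

Lemma route_reaches P u w j0 : tcoord_distinct P -> In u P -> In w P ->
  lowest_in_tri j0 P u w ->
  exists n, route tri_routing P u w n = w /\
            forall k, (k < n)%nat -> route tri_routing P u w k <> w.
Proof.
  intros Hd Hu Hw Hlow0.
  assert (Hex : exists n, route tri_routing P u w n = w).
  { apply NNPP. intros Hno.
    destruct (route_invariant_holds P u w j0 Hd Hu Hw Hlow0 (S (length P)))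
      as (_ & _ & Hcount & _).
    { intros m _ E. apply Hno. now exists m. }
    assert (tri_count u w P <= length P)%nat by apply filter_length_le.
    lia. }
  destruct (dec_inh_nat_subset_has_unique_least_element _
              (fun n => classic (route tri_routing P u w n = w)) Hex)
    as (n & [Hn Hleast] & _).
  exists n. split; [exact Hn |]. intros k Hk Hkw. specialize (Hleast k Hkw). lia.
Qed.

(** * Angles *)

Lemma lagrange_identity a b : dot a b ^ 2 + cross a b ^ 2 = dot a a * dot b b.
Proof. unfold dot, cross. ring. Qed.

Lemma vangle_cos_sin a b : 0 < dot a a -> 0 < dot b b ->
  cos (vangle a b) * (sqrt (dot a a) * sqrt (dot b b)) = dot a b /\
  sin (vangle a b) * (sqrt (dot a a) * sqrt (dot b b)) = Rabs (cross a b).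
Proof.
  intros Ha Hb.
  set (n := sqrt (dot a a) * sqrt (dot b b)).
  assert (Hn : 0 < n) by (apply Rmult_lt_0_compat; now apply sqrt_lt_R0).
  assert (Hnn : n * n = dot a a * dot b b).
  { unfold n. rewrite <- (sqrt_sqrt (dot a a)), <- (sqrt_sqrt (dot b b)) at 3 by lra. ring. }
  pose proof (lagrange_identity a b) as Hlag.
  set (c := dot a b / n).
  assert (Hc : 1 - c² = (Rabs (cross a b) / n)²).
  { unfold c. rewrite !Rsqr_div', <- Rsqr_abs. unfold Rsqr.
    apply (Rmult_eq_reg_r (n * n)); [| nra].
    field_simplify; [| lra | lra]. nra. }
  assert (Hc1 : -1 <= c <= 1).
  { assert (0 <= (Rabs (cross a b) / n)²) by apply Rle_0_sqr.
    unfold Rsqr in *. nra. }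
  unfold vangle. fold n c.
  assert (Habs : 0 <= Rabs (cross a b) / n).
  { apply Rmult_le_pos; [apply Rabs_pos | left; apply Rinv_0_lt_compat; lra]. }
  rewrite cos_acos, sin_acos, Hc, sqrt_Rsqr by assumption.
  unfold c. split; field; lra.
Qed.

Lemma canon_mid_vsub j u w :
  vsub (canon_mid (axis_index j) u w) u = pscale (tcoord j w - tcoord j u) (bis_vec j).
Proof.
  unfold canon_mid, canon_vertex1, canon_vertex2, padd, pscale, vsub.
  rewrite proj_tcoord, cos_PI6. set (h := tcoord j w - tcoord j u).
  pose proof sqrt3_pos.
  assert (Hk : h / (sqrt 3 / 2) = 2 * sqrt 3 / 3 * h).
  { apply (Rmult_eq_reg_l (sqrt 3 / 2)); [| lra].
    replace (sqrt 3 / 2 * (2 * sqrt 3 / 3 * h)) with (sqrt 3 * sqrt 3 / 3 * h) by field.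
    rewrite sqrt3_sq. field. lra. }
  assert (E : sqrt 3 * sqrt 3 * h = 3 * h) by (rewrite sqrt3_sq; ring).
  rewrite Hk.
  destruct j; simpl axis_index; cbn [pos_sector Nat.mul Nat.add];
  [rewrite ray_dir_1, ray_dir_2 | rewrite ray_dir_3, ray_dir_4 | rewrite ray_dir_5, ray_dir_6];
  simpl; f_equal; lra.
Qed.

Lemma bis_vec_unit j : dot (bis_vec j) (bis_vec j) = 1.
Proof. pose proof sqrt3_sq. unfold dot. destruct j; simpl; lra. Qed.

Lemma potential_in_cone j u w : in_cone j u w ->
  potential j u w =
  (sqrt 3 * cos (vangle (vsub w u) (vsub (canon_mid (axis_index j) u w) u))
   + sin (vangle (vsub w u) (vsub (canon_mid (axis_index j) u w) u))) * edist u w.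
Proof.
  intros [H1 H2]. rewrite canon_mid_vsub, edist_dot.
  unfold potential, route_bound.
  set (d := vsub w u). set (b := bis_vec j). set (h := tcoord j w - tcoord j u).
  set (a1 := tcoord (axis_succ j) w - tcoord (axis_succ j) u).
  set (a2 := tcoord (axis_pred j) w - tcoord (axis_pred j) u).
  assert (Hh : tcoord j d = h) by apply tcoord_vsub.
  assert (Ha1 : tcoord (axis_succ j) d = a1) by apply tcoord_vsub.
  assert (Ha2 : tcoord (axis_pred j) d = a2) by apply tcoord_vsub.
  pose proof (tcoord_sum j d) as Hsum. pose proof sqrt3_pos. pose proof sqrt3_sq.
  assert (Hpos : 0 < h) by (subst a1 a2; lra).
  assert (Hdd : 0 < dot d d) by (rewrite (dot_self_tcoord j); nra).
  assert (Hbb : dot (pscale h b) (pscale h b) = h * h).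
  { pose proof (bis_vec_unit j). unfold dot, pscale in *; simpl. fold b in H3. nra. }
  assert (Hdb : dot d (pscale h b) = h * h).
  { rewrite <- Hh at 2. unfold tcoord, dot, pscale; simpl. fold b. ring. }
  assert (Hcr : sqrt 3 * cross d (pscale h b) = h * (a2 - a1)).
  { rewrite <- Ha1, <- Ha2, <- (cross_bis_vec j). unfold cross, pscale; simpl. fold b. ring. }
  destruct (vangle_cos_sin d (pscale h b) Hdd ltac:(nra)) as [Hcos Hsin].
  rewrite Hbb, Hdb, sqrt_square in Hcos by lra. rewrite Hbb, sqrt_square in Hsin by lra.
  set (L := sqrt (dot d d)) in *.
  set (ca := cos (vangle d (pscale h b))) in *. set (sa := sin (vangle d (pscale h b))) in *.
  assert (HL : 0 < L) by now apply sqrt_lt_R0.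
  assert (HcL : ca * L = h) by (apply (Rmult_eq_reg_r h); nra).
  assert (HsL : sqrt 3 * (sa * L) = Rabs (a2 - a1)).
  { apply (Rmult_eq_reg_r h); [| lra].
    transitivity (Rabs (sqrt 3 * cross d (pscale h b))).
    - rewrite Rabs_mult, Rabs_pos_eq, <- Hsin by lra. ring.
    - rewrite Hcr, Rabs_mult, Rabs_pos_eq by lra. ring. }
  apply (Rmult_eq_reg_l (sqrt 3)); [| lra].
  unfold Rmin, Rabs in *.
  destruct (Rle_dec a1 a2), (Rcase_abs (a2 - a1)); nra.
Qed.

Theorem lemma2 :
  exists A : routing_alg,
  forall P : list point, general_position P ->
  forall u w : point, In u P -> In w P ->
  forall i : nat, in_pos_cone i u w ->
  exists n : nat,
    route A P u w n = w /\
    (forall k, (k < n)%nat -> route A P u w k <> w) /\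
    (forall k, (k < n)%nat -> ht6_adj P (route A P u w k) (route A P u w (S k))) /\
    path_length (route A P u w) n <=
      (sqrt 3 * cos (vangle (vsub w u) (vsub (canon_mid i u w) u))
       + sin (vangle (vsub w u) (vsub (canon_mid i u w) u))) * edist u w.
Proof.
  exists tri_routing. intros P Hgp u w Hu Hw i Hcone.
  pose proof (general_position_tcoord_distinct P Hgp) as Hd.
  destruct (axis_index_lt i (proj1 Hcone)) as [j0 ->].
  apply in_pos_cone_iff in Hcone.
  pose proof (lowest_in_tri_of_cone P j0 u w Hd Hu Hcone) as Hlow.
  destruct (route_reaches P u w j0 Hd Hu Hw Hlow) as (n & Hn & Hbefore).
  destruct (route_invariant_holds P u w j0 Hd Hu Hw Hlow n Hbefore)
    as (_ & (j & _ & Hlen) & _ & Hadj).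
  exists n. split; [exact Hn | split; [exact Hbefore | split; [exact Hadj |]]].
  rewrite Hn, potential_self, Rplus_0_r in Hlen.
  now rewrite <- potential_in_cone.
Qed.
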